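(* Let $\mathbf{k}$ be a field and $\underline{R}$ a finitely generated commutative algebra object in the category of polynomial functors over $\mathbf{k}$. Let $I$ be a $\mathrm{GL}$-stable radical ideal of $R$. Then for every $n$ the image of $I$ under the surjection $R\to R_n$ is a radical ideal of $R_n$.
   Context: A polynomial functor over $\mathbf{k}$ is an endofunctor of $\mathbf{k}$-vector spaces that is a subquotient of a finite direct sum of tensor power functors. Put $R_n=\underline{R}(\mathbf{k}^n)$; the standard inclusions $\mathbf{k}^n\to\mathbf{k}^{n+1}$ induce $R_n\to R_{n+1}$ and $R=\varinjlim R_n$. For $m\ge n$ the standard projection $\mathbf{k}^m\to\mathbf{k}^n$ induces $R_m\to R_n$; these are compatible and define a surjection $R\to R_n$ (whose composite with $R_n\to R$ is the identity). $\mathrm{GL}=\bigcup_n\mathrm{GL}_n$ acts on $R$. *)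

From HB Require Import structures.
From mathcomp Require Import all_boot all_order all_algebra.
Set Implicit Arguments. Unset Strict Implicit. Unset Printing Implicit Defensive.
Import Order.TTheory GRing.Theory Num.Theory.
Local Open Scope ring_scope.

Section Defs.
Variable k : fieldType.

(* Index set of the basis of  T^{d_1}(k^n) (+) ... (+) T^{d_r}(k^n),  ds = [d_1;...;d_r] :
   pairs (i, f) with i a summand and f : 'I_{d_i} -> 'I_n a pure tensor of basis vectors. *)
Definition tensor_idx (ds : seq nat) (n : nat) (i : 'I_(size ds)) : finType :=
  {ffun 'I_(seq.nth 0%N ds i) -> 'I_n}.
Arguments tensor_idx : clear implicits.
Definition Idx (ds : seq nat) (n : nat) : finType := {i : 'I_(size ds) & tensor_idx ds n i}.

Definition Amb (ds : seq nat) (n : nat) : lmodType k := {ffun Idx ds n -> k^o}.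

(* Action of a linear map A : k^n -> k^m (column convention) on the direct sum of
   tensor powers: e_g |-> sum_f (prod_t A (f t) (g t)) e_f  on each summand. *)
Definition tensor_act (ds : seq nat) (m n : nat) (A : 'M[k]_(m, n)) (v : Amb ds n)
  : Amb ds m :=
  [ffun x : Idx ds m =>
     \sum_(g : tensor_idx ds n (tag x))
        (\prod_(t < seq.nth 0%N ds (tag x)) A (tagged x t) (g t)) *
        v (Tagged (tensor_idx ds n) g)].

Definition subspace (V : lmodType k) (S : V -> Prop) : Prop :=
  S 0 /\ forall (a : k) (u v : V), S u -> S v -> S (a *: u + v).

Definition subfunctor (ds : seq nat) (U : forall n, Amb ds n -> Prop) : Prop :=
  (forall n, subspace (U n)) /\
  (forall m n (A : 'M[k]_(m, n)) (v : Amb ds n), U n v -> U m (tensor_act A v)).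

(* A commutative k-algebra is a commutative ring A (possibly the zero ring) with a
   structure ring morphism  emb : k -> A. *)
Definition is_structure_map (A : comPzRingType) (emb : k -> A) : Prop :=
  [/\ emb 1 = 1, (forall a b, emb (a + b) = emb a + emb b) & (forall a b, emb (a * b) = emb a * emb b)].

Definition subalgebra (A : comPzRingType) (emb : k -> A) (S : A -> Prop) : Prop :=
  [/\ (forall a, S (emb a)), (forall x y, S x -> S y -> S (x + y))
    & (forall x y, S x -> S y -> S (x * y))].

Definition alg_generated (A : comPzRingType) (emb : k -> A) (G : A -> Prop) : Prop :=
  forall S : A -> Prop, subalgebra emb S -> (forall x, G x -> S x) -> forall x, S x.

Definition ideal (A : comPzRingType) (S : A -> Prop) : Prop :=
  [/\ S 0, (forall x y, S x -> S y -> S (x + y)) & (forall r x, S x -> S (r * x))].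

Definition radical (A : comPzRingType) (S : A -> Prop) : Prop :=
  forall (x : A) (e : nat), S (x ^+ e.+1) -> S x.

(* The standard map k^m -> k^n (inclusion if m <= n, projection if m >= n). *)
Definition stdmx (n m : nat) : 'M[k]_(n, m) := \matrix_(i < n, j < m) ((i == j :> nat)%:R).

Section AlgObj.
(* A commutative algebra object, given by its values R n = R(k^n) on the skeleton
   {k^n} of finite-dimensional spaces, and Rmap m n A = R(A) : R n -> R m. *)
Variable R : nat -> comPzRingType.
Variable emb : forall n, k -> R n.
Variable Rmap : forall m n : nat, 'M[k]_(m, n) -> R n -> R m.

Definition is_alg_functor : Prop :=
  [/\ (forall n, is_structure_map (emb n)), (forall n (x : R n), Rmap 1%:M x = x),
      (forall m n p (A : 'M[k]_(m, n)) (B : 'M[k]_(n, p)) (x : R p),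
          Rmap (A *m B) x = Rmap A (Rmap B x)) &
      (forall m n (A : 'M[k]_(m, n)),
          [/\ Rmap A 1 = 1,
              (forall x y, Rmap A (x + y) = Rmap A x + Rmap A y),
              (forall x y, Rmap A (x * y) = Rmap A x * Rmap A y) &
              (forall (a : k), Rmap A (emb n a) = emb m a)])].

(* R is a finitely generated commutative algebra object in polynomial functors:
   there is a polynomial functor P = U2/U1 (a subquotient of a finite direct sum of
   tensor powers) and a natural linear map P -> R whose image generates R(k^n) as a
   k-algebra for every n (i.e. Sym(P) -> R is surjective). *)
Definition fg_poly_alg : Prop :=
  is_alg_functor /\
  exists (ds : seq nat) (U1 U2 : forall n, Amb ds n -> Prop)
         (phi : forall n, Amb ds n -> R n),
    [/\ subfunctor U1, subfunctor U2 & (forall n v, U1 n v -> U2 n v)] /\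
    [/\ (forall n (a : k) (u v : Amb ds n), phi n (a *: u + v) = emb n a * phi n u + phi n v),
        (forall n v, U1 n v -> phi n v = 0),
        (forall m n (A : 'M[k]_(m, n)) v, U2 n v -> phi m (tensor_act A v) = Rmap A (phi n v))
      & (forall n, alg_generated (emb n) (fun y : R n => exists v, U2 n v /\ y = phi n v))].

(* An ideal I of R = colim R n, described by its preimages I m in R m. *)
Definition colim_ideal (I : forall m, R m -> Prop) : Prop :=
  (forall m, ideal (I m)) /\
  (forall m (x : R m), I m x <-> I m.+1 (Rmap (stdmx m.+1 m) x)).

(* GL = union of the GL_m is acting on R; stability of I. *)
Definition GL_stable (I : forall m, R m -> Prop) : Prop :=
  forall m (g : 'M[k]_m) (x : R m), g \in unitmx -> I m x -> I m (Rmap g x).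

Definition proj_image (I : forall m, R m -> Prop) (n : nat) : R n -> Prop :=
  fun y => exists m (x : R m), (n <= m)%N /\ I m x /\ y = Rmap (stdmx n m) x.

End AlgObj.
End Defs.

Arguments proj_image {k R} Rmap I n _.

(* The image of [I] in [R_n] is [I] itself restricted to [R_n], so it inherits
   radicality; the point is that the projection [k^m.+1 -> k^m] maps [I_m.+1] into
   [I_m] although it is not invertible.  Inside [k^N], [N = m.+1 + s], the composite
   [C] of this projection with the inclusion is deformed along the cube
   [C + \sum_(i in S) f i], where [f i] sends [e_m] to the [i]-th new basis vector.
   For [S != set0] the vertex is [G \o incl] with [G] invertible, so GL-stability puts
   [R(C + \sum_(i in S) f i) x] in [I].  As [R] is generated by a polynomial functor,
   [S |-> R(C + \sum_(i in S) f i) x] has bounded degree [D] in the indicators of [S];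
   for [s > D] its alternating sum over all [S] vanishes, which expresses the vertex
   [S = set0], i.e. [R(C) x], through the others. *)

From HB Require Import structures.
From mathcomp Require Import all_boot all_order all_algebra.
From mathcomp Require Import perm zify.
Set Implicit Arguments. Unset Strict Implicit. Unset Printing Implicit Defensive.
Import Order.TTheory GRing.Theory Num.Theory.
Local Open Scope ring_scope.

Section SetFunDegree.
Variable s : nat.
Notation sT := {set 'I_s}.

(* [h] is a polynomial of degree at most [D] in the indicator variables of [S];
   [a] is its Moebius transform. *)
Definition setfun_deg_le (V : nmodType) D (h : sT -> V) : Prop :=
  exists2 a : sT -> V, forall T : sT, (D < #|T|)%N -> a T = 0
    & forall S : sT, h S = \sum_(T : sT | T \subset S) a T.

Lemma eq_setfun_deg_le (V : nmodType) D (h h' : sT -> V) :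
  h =1 h' -> setfun_deg_le D h -> setfun_deg_le D h'.
Proof. by move=> eh [a a_small ha]; exists a => // S; rewrite -eh. Qed.

Lemma setfun_deg_leW (V : nmodType) D D' (h : sT -> V) :
  (D <= D')%N -> setfun_deg_le D h -> setfun_deg_le D' h.
Proof.
by move=> leDD' [a a_small ha]; exists a => // T /(leq_ltn_trans leDD') /a_small.
Qed.

Lemma setfun_deg_le_cst (V : nmodType) (c : V) : setfun_deg_le 0 (fun=> c).
Proof.
exists (fun T => if T == set0 then c else 0) => [T|S].
  by case: eqP => // ->; rewrite cards0.
rewrite -big_mkcondr (big_pred1 set0) // => T.
by rewrite andb_idl // => /eqP ->; rewrite sub0set.
Qed.

Lemma setfun_deg_le_indicator (V : nmodType) (i : 'I_s) (y : V) :
  setfun_deg_le 1 (fun S => if i \in S then y else 0).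
Proof.
exists (fun T => if T == [set i] then y else 0) => [T|S].
  by case: eqP => // ->; rewrite cards1.
rewrite -big_mkcondr; case: (boolP (i \in S)) => iS.
  by rewrite (big_pred1 [set i]) // => T; rewrite andb_idl // => /eqP ->; rewrite sub1set.
rewrite big_pred0 // => T; apply/andP => -[/subsetP TS /eqP eT].
by rewrite (TS i) ?eT ?set11 in iS.
Qed.

Lemma setfun_deg_leD (V : nmodType) D (h1 h2 : sT -> V) :
  setfun_deg_le D h1 -> setfun_deg_le D h2 -> setfun_deg_le D (fun S => h1 S + h2 S).
Proof.
move=> [a1 small1 ha1] [a2 small2 ha2]; exists (fun T => a1 T + a2 T) => [T lt|S].
  by rewrite small1 // small2 // addr0.
by rewrite ha1 ha2 big_split.
Qed.

Lemma setfun_deg_le_sum (V : nmodType) D (J : finType) (F : J -> sT -> V) :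
  (forall j, setfun_deg_le D (F j)) -> setfun_deg_le D (fun S => \sum_j F j S).
Proof.
move=> degF; have [a small ha] := fin_all_exists2 degF.
exists (fun T => \sum_j a j T) => [T lt|S]; first by rewrite big1 // => j _; rewrite small.
by rewrite exchange_big; apply: eq_bigr => j _; rewrite ha.
Qed.

Lemma setfun_deg_le_ffun (V : nmodType) D (J : finType) (h : sT -> {ffun J -> V}) :
  (forall x, setfun_deg_le D (fun S => h S x)) -> setfun_deg_le D h.
Proof.
move=> degh; have [a small ha] := fin_all_exists2 degh.
exists (fun T => [ffun x => a x T]) => [T lt|S]; apply/ffunP => x; rewrite ?ffunE.
  by rewrite small.
by rewrite sum_ffunE ha; apply: eq_bigr => T _; rewrite ffunE.
Qed.

Lemma setfun_deg_le_additive (U V : nmodType) D (f : U -> V) (h : sT -> U) :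
  f 0 = 0 -> {morph f : x y / x + y} ->
  setfun_deg_le D h -> setfun_deg_le D (fun S => f (h S)).
Proof.
move=> f0 fD [a a_small ha]; exists (fun T => f (a T)) => [T /a_small -> //|S].
by rewrite ha (big_morph f fD f0).
Qed.

Lemma setfun_deg_leM (V : pzSemiRingType) D1 D2 (h1 h2 : sT -> V) :
  setfun_deg_le D1 h1 -> setfun_deg_le D2 h2 ->
  setfun_deg_le (D1 + D2) (fun S => h1 S * h2 S).
Proof.
move=> [a1 small1 ha1] [a2 small2 ha2].
exists (fun T => \sum_(P : sT * sT | P.1 :|: P.2 == T) a1 P.1 * a2 P.2).
  move=> T lt; rewrite big1 // => P /eqP eT.
  have : (D1 + D2 < #|P.1| + #|P.2|)%N by apply: leq_trans lt _; rewrite -eT leq_card_setU.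
  case: (ltnP D1 #|P.1|) => [/small1 -> _|le1 lt2]; first by rewrite mul0r.
  by rewrite small2 ?mulr0 // -(ltn_add2l D1) (leq_trans lt2) ?leq_add2r.
move=> S; rewrite ha1 ha2 mulr_suml; under eq_bigr do rewrite mulr_sumr.
rewrite pair_big /= (partition_big (fun P => P.1 :|: P.2) (fun T => T \subset S)) /=.
  apply: eq_bigr => T TS; apply: eq_bigl => P.
  by case: eqP => [eT|]; rewrite ?andbF // andbT -subUset eT.
by move=> P; rewrite subUset.
Qed.

Lemma setfun_deg_le_prod (V : pzSemiRingType) d (F : 'I_d -> sT -> V) :
  (forall t, setfun_deg_le 1 (F t)) -> setfun_deg_le d (fun S => \prod_(t < d) F t S).
Proof.
elim: d F => [|d IH] F degF.
  by apply: eq_setfun_deg_le (setfun_deg_le_cst 1) => S; rewrite big_ord0.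
have := setfun_deg_leM (IH _ (fun t => degF (widen_ord (leqnSn d) t))) (degF ord_max).
by rewrite addn1; apply: eq_setfun_deg_le => S; rewrite big_ord_recr.
Qed.

Lemma sum_supersets_sign (V : comPzRingType) (T : sT) :
  T != setT -> \sum_(S : sT | T \subset S) (-1) ^+ #|S| = 0 :> V.
Proof.
rewrite -subTset => /subsetPn [i _ iT].
(* [(-1) ^+ #|S|] for [T \subset S], else [0]: the expansion of a product of
   factors [-1 + (j \notin T)%:R], one of which vanishes. *)
transitivity (\sum_(S : sT) \prod_j (if j \in S then -1 else (j \notin T)%:R) : V).
  rewrite big_mkcond; apply: eq_bigr => S _.
  case: (boolP (T \subset S)) => [/subsetP TS|/subsetPn [j jT jS]].
    rewrite -prodr_const big_mkcond; apply: eq_bigr => j _.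
    by case: (boolP (j \in S)) => // jS; rewrite (contra (TS j)).
  by rewrite (bigD1 j) //= (negbTE jS) jT mul0r.
rewrite -(bigA_distr _ _ (fun=> -1) (fun j => (j \notin T)%:R)).
by rewrite (bigD1 i) //= iT addNr mul0r.
Qed.

Lemma setfun_deg_le_alternating_sum (V : comPzRingType) D (h : sT -> V) :
  (D < s)%N -> setfun_deg_le D h -> \sum_(S : sT) (-1) ^+ #|S| * h S = 0.
Proof.
move=> ltDs [a a_small ha]; under eq_bigr do rewrite ha mulr_sumr.
rewrite (exchange_big_dep xpredT) //= big1 // => T _.
rewrite -mulr_suml; have [/a_small ->|leTD] := ltnP D #|T|; first by rewrite mulr0.
rewrite sum_supersets_sign ?mul0r //; apply: contraTneq leTD => ->.
by rewrite cardsT card_ord -ltnNge.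
Qed.

End SetFunDegree.

Lemma stdmxE (k : fieldType) n m : stdmx k n m = pid_mx m.
Proof. by apply/matrixP => i j; rewrite !mxE; case: eqP => // ->; rewrite ltn_ord. Qed.

Lemma stdmx_mul (k : fieldType) a b c : (minn a c <= b)%N ->
  stdmx k a b *m stdmx k b c = stdmx k a c.
Proof.
move=> le_ac_b; rewrite !stdmxE mul_pid_mx minnA minnn -(@pid_mx_minv _ a).
by rewrite (_ : minn a (minn b c) = minn a c) ?pid_mx_minv //; lia.
Qed.

Section CubeVertex.
Variables (k : fieldType) (m s : nat) (S : {set 'I_s}) (i0 : 'I_s).
Hypothesis i0S : i0 \in S.
Local Notation N := (m.+1 + s)%N.
Let q : 'I_N := lshift s ord_max.
Let p : 'I_N := rshift m.+1 i0.

Let mul_tperm_pid_mx :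
  tperm_mx q p *m pid_mx m.+1 = pid_mx m + delta_mx p ord_max :> 'M[k]_(N, m.+1).
Proof.
apply/matrixP => a b; rewrite -xrowE !mxE.
have := ltn_ord b; case: tpermP => [->|->|/eqP aq /eqP ap] lt_b;
  rewrite -natrD; congr _%:R; rewrite -?val_eqE /= in lt_b *; [lia | lia |].
by rewrite -!val_eqE /= in aq ap; lia.
Qed.

Let mul_delta_pid_mx0 (r : 'I_N) : delta_mx r p *m pid_mx m = 0 :> 'M[k]_(N, m.+1).
Proof.
apply/matrixP => a b; rewrite !mxE big1 // => c _; rewrite !mxE -natrM.
by rewrite (_ : _ * _ = 0)%N // -!val_eqE /=; lia.
Qed.

Lemma cube_vertex_factor : exists2 G : 'M[k]_N, G \in unitmx &
  G *m pid_mx m.+1 = pid_mx m + \sum_(i in S) delta_mx (rshift m.+1 i) (ord_max : 'I_m.+1).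
Proof.
(* [G] sends [e_m] to the sum of the new basis vectors indexed by [S], and the
   [i0]-th of them to [e_m]; it is a transposition followed by a unipotent matrix. *)
pose nilp := \sum_(i in S | i != i0) delta_mx (rshift m.+1 i) p : 'M[k]_N.
have nilp_sq0 : nilp *m nilp = 0.
  rewrite mulmx_suml big1 // => i _; rewrite mulmx_sumr big1 // => j /andP[_ ji0].
  by rewrite mul_delta_mx_0 // eq_rshift eq_sym.
exists ((1%:M + nilp) *m tperm_mx q p).
  rewrite unitmx_mul unitmx_perm andbT.
  suff /mulmx1_unit[] : (1%:M + nilp) *m (1%:M - nilp) = 1%:M by [].
  by rewrite mulmxDl !mulmxBr !mul1mx mulmx1 nilp_sq0 subr0 subrK.
rewrite -mulmxA mul_tperm_pid_mx mulmxDl mul1mx !mulmxDr mulmx_suml.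
rewrite big1 => [|i _]; last exact: mul_delta_pid_mx0.
rewrite add0r mulmx_suml [in RHS](bigD1 i0) //= addrA; congr (_ + _).
by apply: eq_bigr => i _; rewrite mul_delta_mx.
Qed.

End CubeVertex.

Section MatrixFunDegree.
Variables (k : fieldType) (N m : nat).

(* Satisfied by maps given by polynomials of degree at most [D] in the entries, as
   the entries of [C + \sum_(i in S) f i] are affine in the indicators of [S]; unlike
   polynomial identities, this notion behaves well over finite fields. *)
Definition mxfun_deg_le (V : nmodType) D (F : 'M[k]_(N, m) -> V) : Prop :=
  forall s (C : 'M[k]_(N, m)) (f : 'I_s -> 'M[k]_(N, m)),
    setfun_deg_le D (fun S : {set 'I_s} => F (C + \sum_(i in S) f i)).

Lemma eq_mxfun_deg_le (V : nmodType) D (F G : 'M[k]_(N, m) -> V) :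
  F =1 G -> mxfun_deg_le D F -> mxfun_deg_le D G.
Proof. by move=> eFG degF s C f; apply: eq_setfun_deg_le (degF s C f) => S. Qed.

Lemma mxfun_deg_leW (V : nmodType) D D' (F : 'M[k]_(N, m) -> V) :
  (D <= D')%N -> mxfun_deg_le D F -> mxfun_deg_le D' F.
Proof. by move=> leDD' degF s C f; apply: setfun_deg_leW leDD' (degF s C f). Qed.

Lemma mxfun_deg_le_cst (V : nmodType) (c : V) : mxfun_deg_le 0 (fun=> c).
Proof. by move=> s C f; apply: setfun_deg_le_cst. Qed.

Lemma mxfun_deg_leD (V : nmodType) D (F G : 'M[k]_(N, m) -> V) :
  mxfun_deg_le D F -> mxfun_deg_le D G -> mxfun_deg_le D (fun A => F A + G A).
Proof. by move=> degF degG s C f; apply: setfun_deg_leD (degF s C f) (degG s C f). Qed.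

Lemma mxfun_deg_leM (V : pzSemiRingType) D1 D2 (F G : 'M[k]_(N, m) -> V) :
  mxfun_deg_le D1 F -> mxfun_deg_le D2 G -> mxfun_deg_le (D1 + D2) (fun A => F A * G A).
Proof. by move=> degF degG s C f; apply: setfun_deg_leM (degF s C f) (degG s C f). Qed.

Lemma mxfun_deg_le_additive (U V : nmodType) D (phi : U -> V) (F : 'M[k]_(N, m) -> U) :
  phi 0 = 0 -> {morph phi : x y / x + y} ->
  mxfun_deg_le D F -> mxfun_deg_le D (fun A => phi (F A)).
Proof. by move=> phi0 phiD degF s C f; apply: setfun_deg_le_additive (degF s C f). Qed.

Lemma mxfun_deg_le_entry a b : mxfun_deg_le 1 (fun A : 'M[k]_(N, m) => A a b).
Proof.
move=> s C f.
have := setfun_deg_leD (setfun_deg_leW (leq0n 1) (setfun_deg_le_cst _ (C a b)))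
  (setfun_deg_le_sum (fun i => setfun_deg_le_indicator i (f i a b))).
by apply: eq_setfun_deg_le => S; rewrite mxE summxE [in RHS]big_mkcond.
Qed.

Lemma mxfun_deg_le_tensor_act ds (v : Amb k ds m) :
  mxfun_deg_le (\max_(i < size ds) nth 0%N ds i) (fun A => tensor_act A v).
Proof.
move=> s C f; apply: setfun_deg_le_ffun => x.
pose h (S : {set 'I_s}) : k := \sum_(g : @tensor_idx ds m (tag x))
  (\prod_(t < nth 0%N ds (tag x)) (C + \sum_(i in S) f i) (tagged x t) (g t)) *
  v (Tagged (@tensor_idx ds m) g).
apply: (eq_setfun_deg_le (h := h)) => [S|]; first by rewrite ffunE.
apply: setfun_deg_le_sum => g; rewrite -[X in setfun_deg_le X _]addn0.
apply: setfun_deg_leW (leq_add (leq_bigmax (tag x)) (leqnn 0)) _.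
apply: setfun_deg_leM (setfun_deg_le_cst _ _).
by apply: setfun_deg_le_prod => t; apply: mxfun_deg_le_entry.
Qed.

End MatrixFunDegree.

Section GeneratedAlgebraDegree.
Variables (k : fieldType) (R : nat -> comPzRingType) (emb : forall n, k -> R n)
  (Rmap : forall m n : nat, 'M[k]_(m, n) -> R n -> R m) (ds : seq nat)
  (U : forall n, Amb k ds n -> Prop) (phi : forall n, Amb k ds n -> R n).
Hypothesis emb1 : forall n, emb n 1 = 1.
Hypothesis Rmap_hom : forall m n (A : 'M[k]_(m, n)),
  [/\ Rmap A 1 = 1, {morph Rmap A : x y / x + y}, {morph Rmap A : x y / x * y} &
      forall a : k, Rmap A (emb n a) = emb m a].
Hypothesis phi_linear : forall n (a : k) (u v : Amb k ds n),
  phi (a *: u + v) = emb n a * phi u + phi v.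
Hypothesis phi_natural : forall m n (A : 'M[k]_(m, n)) v,
  U v -> phi (tensor_act A v) = Rmap A (phi v).
Hypothesis phi_generates : forall n,
  alg_generated (emb n) (fun y : R n => exists v, U v /\ y = phi v).

Let phiD n : {morph @phi n : u v / u + v}.
Proof. by move=> u v; rewrite -[u in LHS]scale1r phi_linear emb1 mul1r. Qed.

Let phi0 n : phi (0 : Amb k ds n) = 0.
Proof. by apply: (@addrI _ (phi (0 : Amb k ds n))); rewrite -phiD !addr0. Qed.

Lemma Rmap_deg_bounded m (x : R m) :
  exists D, forall N, mxfun_deg_le D (fun A : 'M[k]_(N, m) => Rmap A x).
Proof.
pose bounded (y : R m) :=
  exists D, forall N, mxfun_deg_le D (fun A : 'M[k]_(N, m) => Rmap A y).
apply: (phi_generates (S := bounded)) => [|y [v [Uv ->]]].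
  split=> [a|y z [D1 degy] [D2 degz]|y z [D1 degy] [D2 degz]].
  - exists 0%N => N; apply: eq_mxfun_deg_le (@mxfun_deg_le_cst k N m _ (emb N a)) => A.
    by case: (Rmap_hom A) => _ _ _ ->.
  - exists (maxn D1 D2) => N.
    apply: eq_mxfun_deg_le (mxfun_deg_leD (mxfun_deg_leW (leq_maxl _ _) (degy N))
                                          (mxfun_deg_leW (leq_maxr _ _) (degz N))) => A.
    by case: (Rmap_hom A) => _ ->.
  - exists (D1 + D2)%N => N.
    apply: eq_mxfun_deg_le (mxfun_deg_leM (degy N) (degz N)) => A.
    by case: (Rmap_hom A) => _ _ ->.
exists (\max_(i < size ds) nth 0%N ds i) => N.
apply: eq_mxfun_deg_le (mxfun_deg_le_additive (phi0 N) (@phiD N)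
                          (@mxfun_deg_le_tensor_act k N m ds v)) => A.
exact: phi_natural.
Qed.

End GeneratedAlgebraDegree.

Section StableIdealProjection.
Variables (k : fieldType) (R : nat -> comPzRingType)
  (Rmap : forall m n : nat, 'M[k]_(m, n) -> R n -> R m) (I : forall m, R m -> Prop).
Arguments I : clear implicits.
Hypothesis Rmap1 : forall n (x : R n), Rmap 1%:M x = x.
Hypothesis RmapM : forall m n p (A : 'M[k]_(m, n)) (B : 'M[k]_(n, p)) (x : R p),
  Rmap (A *m B) x = Rmap A (Rmap B x).
Hypothesis I_ideal : forall m, ideal (I m).
Hypothesis I_incl_succ : forall m (x : R m), I m x <-> I m.+1 (Rmap (stdmx k m.+1 m) x).
Hypothesis I_GL : GL_stable Rmap I.
Hypothesis Rmap_deg : forall m (x : R m),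
  exists D, forall N, mxfun_deg_le D (fun A : 'M[k]_(N, m) => Rmap A x).

Lemma I_incl n m (x : R n) : (n <= m)%N -> I n x <-> I m (Rmap (stdmx k m n) x).
Proof.
elim: m => [|m IH]; first by rewrite leqn0 => /eqP <-; rewrite stdmxE pid_mx_1 Rmap1.
rewrite leq_eqVlt => /predU1P[<-|lt_nm]; first by rewrite stdmxE pid_mx_1 Rmap1.
by rewrite (IH lt_nm) I_incl_succ -RmapM stdmx_mul //; lia.
Qed.

Lemma I_sum m (J : finType) (P : pred J) (F : J -> R m) :
  (forall j, P j -> I m (F j)) -> I m (\sum_(j | P j) F j).
Proof. by case: (I_ideal m) => I0 ID _; apply: big_ind. Qed.

Lemma I_proj_succ m (x : R m.+1) : I m.+1 x -> I m (Rmap (stdmx k m m.+1) x).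
Proof.
move=> Ix; have [D degx] := Rmap_deg x; pose N := (m.+1 + D.+1)%N.
pose h (S : {set 'I_D.+1}) :=
  Rmap (pid_mx m + \sum_(i in S) delta_mx (rshift m.+1 i) ord_max : 'M[k]_(N, m.+1)) x.
have h_alt : \sum_(S : {set 'I_D.+1}) (-1) ^+ #|S| * h S = 0.
  exact: setfun_deg_le_alternating_sum (ltnSn D) (degx N _ _ _).
have I_h S : S != set0 -> I N (h S).
  case/set0Pn => i0 /(@cube_vertex_factor k m)[G unitG]; rewrite /h => <-.
  by rewrite RmapM; apply: I_GL unitG _; rewrite -stdmxE -I_incl // leq_addr.
have : I N (h set0).
  move: h_alt; rewrite (bigD1 set0) //= cards0 expr0 mul1r => /eqP.
  rewrite addr_eq0 => /eqP ->; rewrite -sumrN; apply: I_sum => S /I_h IhS.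
  by rewrite -mulNr; case: (I_ideal N) => _ _; apply.
rewrite /h big_set0 addr0 (_ : pid_mx m = stdmx k N m *m stdmx k m m.+1).
  by rewrite RmapM -I_incl //; lia.
by rewrite !stdmxE mul_pid_mx (minn_idPl (leqnSn m)) minnn.
Qed.

Lemma I_proj n m (x : R m) : (n <= m)%N -> I m x -> I n (Rmap (stdmx k n m) x).
Proof.
elim: m x => [|m IH] x; first by rewrite leqn0 => /eqP ->; rewrite stdmxE pid_mx_1 Rmap1.
rewrite leq_eqVlt => /predU1P[->|lt_nm]; first by rewrite stdmxE pid_mx_1 Rmap1.
by move=> /I_proj_succ /(IH _ lt_nm); rewrite -RmapM stdmx_mul //; lia.
Qed.

Lemma proj_imageE n (y : R n) : proj_image Rmap I n y <-> I n y.
Proof.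
split=> [[m [x [le_nm [Ix ->]]]]|Iy]; first exact: I_proj.
by exists n, y; rewrite stdmxE pid_mx_1 Rmap1.
Qed.

End StableIdealProjection.

Theorem lemma2p5 (k : fieldType) (R : nat -> comPzRingType) (emb : forall n, k -> R n)
  (Rmap : forall m n : nat, 'M[k]_(m, n) -> R n -> R m)
  (I : forall m, R m -> Prop) :
  fg_poly_alg emb Rmap ->
  colim_ideal Rmap I ->
  GL_stable Rmap I ->
  (forall m, radical (I m)) ->
  forall n : nat, ideal (proj_image Rmap I n) /\ radical (proj_image Rmap I n).
Proof.
move=> [[emb_hom Rmap1 RmapM Rmap_hom] [ds [_ [U [phi [_ [phi_linear _ phi_natural]]]]]]].
move=> phi_generates [I_ideal I_incl_succ] I_GL I_radical n.
have emb1 m : emb m 1 = 1 by case: (emb_hom m).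
have Rmap_deg := Rmap_deg_bounded emb1 Rmap_hom phi_linear phi_natural phi_generates.
have E := proj_imageE Rmap1 RmapM I_ideal I_incl_succ I_GL Rmap_deg (n := n).
case: (I_ideal n) => I0 ID IM; split; first split.
- exact/E/I0.
- by move=> y z /E Iy /E Iz; apply/E/ID.
- by move=> r y /E Iy; apply/E/IM.
by move=> y e /E /I_radical Iy; apply/E.
Qed.
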